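(* Let $\mathbf A$ be a finite $\Pi$-structure, $\mathbf B$ a $\Sigma$-structure and $k\ge1$. For every $\Pi$-structure $\mathbf X$, if $\mathbf X\to\mathbf A$ then $\kappa_k^{\mathbf A,\mathbf B}(\mathbf X)\to\mathbf B$.
   Context: Structures. A (multisorted relational) signature consists of types and relation symbols, each symbol $R$ having an arity $\mathrm{ar}_R$, a tuple of types. A structure $\mathbf A$ consists of a set $A_t$ per type and relations $R^{\mathbf A}\subseteq A_{\mathrm{ar}_R(1)}\times\dots\times A_{\mathrm{ar}_R(k)}$. A homomorphism is a type-preserving family of maps preserving all relations; write $\mathbf A\to\mathbf B$. For a finite set $F$, $\mathbf B^F$ has domains $B_t^F$ and $(b_1,\dots,b_m)\in R^{\mathbf B^F}$ iff $(b_1(i),\dots,b_m(i))\in R^{\mathbf B}$ for all $i\in F$. $k$-consistency reduction. For a $\Pi$-structure $\mathbf X$ and a set $K$ of at most $k$ elements of $\mathbf X$, a partial homomorphism $K\to\mathbf A$ is a type-preserving $f\colon K\to A$ with $(f(v_1),\dots,f(v_m))\in R^{\mathbf A}$ for every $(v_1,\dots,v_m)\in R^{\mathbf X}$ with all $v_i\in K$. $\kappa_k^{\mathbf A,\mathbf B}(\mathbf X)$ is built as follows: (1) for each $K$ with $|K|\le k$ let $\mathcal F_K$ be the set of partial homomorphisms $K\to\mathbf A$; (2) for each $L\subset K$ remove from $\mathcal F_L$ every element that is not the restriction of some $g\in\mathcal F_K$, and remove from $\mathcal F_K$ every $g$ with $g|_L\notin\mathcal F_L$; (3) repeat (2) until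 nothing changes; (4) for each $K$ take a copy of $\mathbf B^{\mathcal F_K}$ with elements $(K;b)$, $b\colon\mathcal F_K\to B_t$; (5) for each $L\subseteq K$ and $b\colon\mathcal F_L\to B_t$ identify $(K;b\circ\rho_{K,L})$ with $(L;b)$, where $\rho_{K,L}(g)=g|_L$. The output is the quotient by the generated equivalence relation, with relations the images of those of the copies. *)

(* Multisorted relational structures encoded as a single
   carrier with a typing function (the disjoint union of the sorts). *)
From Stdlib Require Import List Relations.
Import ListNotations.

Record signature := {
  sty : Type;
  ssym : Type;
  sar : ssym -> list sty
}.

Record structure (S : signature) := {
  carrier :> Type;
  tp : carrier -> sty S;
  rel : ssym S -> list carrier -> Prop;
  rel_wt : forall R s, rel R s -> map tp s = sar S R
}.
Arguments tp {S s0} _.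
Arguments rel {S} s0 _ _.

Definition is_hom {S} (A B : structure S) (h : A -> B) : Prop :=
  (forall x, tp (h x) = tp x) /\
  (forall R s, rel A R s -> rel B R (map h s)).

Definition hom_exists {S} (A B : structure S) : Prop := exists h, is_hom A B h.

Definition finite_structure {S} (A : structure S) : Prop :=
  exists s : list A, forall a : A, In a s.

Section Kappa.
Variables (Pi Sigma : signature) (k : nat)
          (A : structure Pi) (B : structure Sigma) (X : structure Pi).

Definition small (K : X -> Prop) : Prop :=
  exists s : list X, length s <= k /\ forall x, K x <-> In x s.

(* partial maps K -> A are encoded as  X -> option A  with domain exactly K *)
Definition parthom (K : X -> Prop) (f : X -> option A) : Prop :=
  (forall x, K x <-> exists a, f x = Some a) /\
  (forall x a, f x = Some a -> tp a = tp x) /\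
  (forall R s, rel X R s -> (forall v, In v s -> K v) ->
     exists s', map f s = map Some s' /\ rel A R s').

Definition restricts (L : X -> Prop) (g f : X -> option A) : Prop :=
  forall x, (L x -> f x = g x) /\ (~ L x -> f x = None).

(* a family (F_K)_K that is stable under step (2) of the algorithm *)
Definition consistent (F : (X -> Prop) -> (X -> option A) -> Prop) : Prop :=
  (forall K f, F K f -> small K /\ parthom K f) /\
  (forall K L, small K -> (forall x, L x -> K x) ->
     (forall f, F L f -> exists g, F K g /\ restricts L g f) /\
     (forall g f, F K g -> restricts L g f -> F L f)).

(* the family F_K produced by steps (1)-(3): the greatest consistent
   subfamily of the partial homomorphisms *)
Definition kfam (K : X -> Prop) (f : X -> option A) : Prop :=
  exists F, consistent F /\ F K f.

(* pre-elements (K; b) of type t, with b : F_K -> B_t *)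
Record pre := { pK : X -> Prop; pt : sty Sigma; pb : (X -> option A) -> B }.

Definition valid (p : pre) : Prop :=
  small (pK p) /\ forall f, kfam (pK p) f -> tp (pb p f) = pt p.

(* generating identification: p = (K; b o rho_{K,L}), q = (L; b), L ⊆ K *)
Definition gen (p q : pre) : Prop :=
  valid p /\ valid q /\ pt p = pt q /\ (forall x, pK q x -> pK p x) /\
  (forall g f, kfam (pK p) g -> restricts (pK q) g f -> pb p g = pb q f).

Definition kequiv : pre -> pre -> Prop := clos_refl_sym_trans pre gen.

(* elements of the quotient: equivalence classes (tagged with their type) *)
Definition kcarrier : Type :=
  { c : sty Sigma * (pre -> Prop) |
    exists p, valid p /\ pt p = fst c /\ snd c = kequiv p }.

Definition ktp (c : kcarrier) : sty Sigma := fst (proj1_sig c).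

(* relations: images of the relations of the copies B^{F_K} *)
Definition krel (R : ssym Sigma) (cs : list kcarrier) : Prop :=
  map ktp cs = sar Sigma R /\
  exists (K : X -> Prop) (qs : list (pre * kcarrier)),
    small K /\ map snd qs = cs /\ map (fun q => pt (fst q)) qs = sar Sigma R /\
    (forall q, In q qs ->
       valid (fst q) /\ pK (fst q) = K /\ snd (proj1_sig (snd q)) = kequiv (fst q)) /\
    (forall f, kfam K f -> rel B R (map (fun q => pb (fst q) f) qs)).

Lemma krel_wt R s : krel R s -> map ktp s = sar Sigma R.
Proof. intros H; exact (proj1 H). Qed.

Definition kappa : structure Sigma :=
  {| carrier := kcarrier; tp := ktp; rel := krel; rel_wt := krel_wt |}.

End Kappa.

(* If h : X -> A is a homomorphism, then for every small set K the restriction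
   h|_K is a partial homomorphism, and the family of all these restrictions is
   stable under step (2) of the k-consistency algorithm.  Hence h|_K survives
   in the family F_K computed by the algorithm (kfam), for every K.

   An element (K; b) of the copy B^{F_K} can therefore be evaluated at h|_K,
   giving b(h|_K) in B.  The generating identifications (K; b o rho_{K,L}) ~
   (L; b) respect this evaluation, because the restriction of h|_K to L is
   h|_L; so evaluation descends to the quotient kappa_k^{A,B}(X).  It preserves
   types, and it preserves relations since each relation of the quotient is the
   image of a relation of some B^{F_K}, which holds coordinatewise, in particular
   at the coordinate h|_K.  This gives the homomorphism kappa_k^{A,B}(X) -> B. *)
From Stdlib Require Import Arith List Relations Classical ClassicalEpsilon.

Lemma small_sub (Pi : signature) (k : nat) (X : structure Pi) (K L : X -> Prop) :
  small Pi k X K -> (forall x, L x -> K x) -> small Pi k X L.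
Proof.
  intros [s [Hlen Hs]] HLK.
  exists (filter (fun x => if excluded_middle_informative (L x) then true else false) s).
  split.
  - eapply Nat.le_trans; [apply filter_length_le | exact Hlen].
  - intros x; rewrite filter_In.
    destruct (excluded_middle_informative (L x)) as [Lx | nLx]; split.
    + intros _; split; [apply Hs, HLK, Lx | reflexivity].
    + intros _; exact Lx.
    + intros Lx; contradiction (nLx Lx).
    + intros [_ Htrue]; discriminate.
Qed.

Section Evaluation.
Variables (Pi Sigma : signature) (A : structure Pi) (B : structure Sigma) (k : nat)
  (X : structure Pi) (h : X -> A) (Hh : is_hom X A h).

(* The total map h, as a partial map; a partial map f is "h restricted to K"
   exactly when  restricts K hSome f  holds. *)
Definition hSome (x : X) : option A := Some (h x).

Definition restr (K : X -> Prop) (x : X) : option A :=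
  if excluded_middle_informative (K x) then Some (h x) else None.

Lemma restr_restricts K : restricts Pi A X K hSome (restr K).
Proof.
  intros x; unfold restr.
  destruct (excluded_middle_informative (K x)); split; tauto.
Qed.

Lemma restricts_trans K L g f :
  (forall x, L x -> K x) -> restricts Pi A X K hSome g ->
  restricts Pi A X L g f -> restricts Pi A X L hSome f.
Proof.
  intros HLK Hg Hf x; split; intros Hx.
  - rewrite (proj1 (Hf x) Hx); apply (Hg x), HLK, Hx.
  - apply (Hf x), Hx.
Qed.

Lemma restriction_parthom K f :
  restricts Pi A X K hSome f -> parthom Pi A X K f.
Proof.
  destruct Hh as [Htp Hrel]; intros Hf; split; [| split].
  - intros x; split.
    + intros Kx; exists (h x); apply (Hf x), Kx.
    + intros [a Ha]; apply NNPP; intros nKx.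
      rewrite (proj2 (Hf x) nKx) in Ha; discriminate.
  - intros x a Ha; destruct (classic (K x)) as [Kx | nKx].
    + rewrite (proj1 (Hf x) Kx) in Ha; injection Ha as <-; apply Htp.
    + rewrite (proj2 (Hf x) nKx) in Ha; discriminate.
  - intros R s Hr Hall; exists (map h s); split.
    + rewrite map_map; apply map_ext_in; intros v Hv; apply (Hf v), Hall, Hv.
    + apply Hrel, Hr.
Qed.

Definition restrictions (K : X -> Prop) (f : X -> option A) : Prop :=
  small Pi k X K /\ restricts Pi A X K hSome f.

Lemma restrictions_consistent : consistent Pi k A X restrictions.
Proof.
  split.
  - intros K f [HK Hf]; split; [exact HK | apply restriction_parthom, Hf].
  - intros K L HK HLK; split.
    + intros f [_ Hf]; exists (restr K); split.
      * split; [exact HK | apply restr_restricts].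
      * intros x; split; intros Hx.
        -- rewrite (proj1 (Hf x) Hx), (proj1 (restr_restricts K x)); auto.
        -- apply (Hf x), Hx.
    + intros g f [_ Hg] Hf; split.
      * eapply small_sub; eauto.
      * eapply restricts_trans; eauto.
Qed.

Lemma restr_kfam K : small Pi k X K -> kfam Pi k A X K (restr K).
Proof.
  intros HK; exists restrictions; split; [apply restrictions_consistent |].
  split; [exact HK | apply restr_restricts].
Qed.

Definition eval (p : pre Pi Sigma A B X) : B := pb _ _ _ _ _ p (restr (pK _ _ _ _ _ p)).

Lemma eval_kequiv p q : kequiv Pi Sigma k A B X p q -> eval p = eval q.
Proof.
  induction 1 as [p q Hgen | p | p q _ IH | p q r _ IH1 _ IH2]; try congruence.
  destruct Hgen as [[HKp _] [_ [_ [Hsub Hb]]]].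
  apply Hb; [apply restr_kfam, HKp |].
  intros x; split; intros Hx.
  - rewrite (proj1 (restr_restricts _ x)), (proj1 (restr_restricts _ x)); auto.
  - apply (proj2 (restr_restricts _ x)), Hx.
Qed.

Definition eval_class (c : kcarrier Pi Sigma k A B X) : B :=
  eval (proj1_sig (constructive_indefinite_description _ (proj2_sig c))).

Lemma eval_class_spec c p :
  snd (proj1_sig c) = kequiv Pi Sigma k A B X p -> eval_class c = eval p.
Proof.
  intros Hc; unfold eval_class.
  destruct (constructive_indefinite_description _ (proj2_sig c)) as [p' Hp'].
  simpl; symmetry; apply eval_kequiv.
  destruct Hp' as [_ [_ Hp']].
  rewrite <- Hc, Hp'; apply rst_refl.
Qed.

Lemma eval_class_hom : is_hom (kappa Pi Sigma k A B X) B eval_class.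
Proof.
  split.
  - intros c; simpl; unfold eval_class, ktp.
    destruct (constructive_indefinite_description _ (proj2_sig c)) as [p Hp].
    simpl; destruct Hp as [[HK Hb] [Ht _]].
    rewrite <- Ht; apply Hb, restr_kfam, HK.
  - intros R cs [_ [K [qs [HK [Hcs [_ [Hqs Hrel]]]]]]]; simpl.
    specialize (Hrel (restr K) (restr_kfam K HK)).
    replace (map eval_class cs) with (map (fun q => pb _ _ _ _ _ (fst q) (restr K)) qs);
      [exact Hrel |].
    subst cs; rewrite map_map; apply map_ext_in; intros q Hq.
    destruct (Hqs q Hq) as [_ [HqK Heq]].
    rewrite (eval_class_spec _ _ Heq); unfold eval; rewrite HqK; reflexivity.
Qed.

End Evaluation.

Theorem mainTheorem18 (Pi Sigma : signature) (A : structure Pi)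
  (B : structure Sigma) (k : nat) :
  finite_structure A -> 1 <= k ->
  forall X : structure Pi,
    hom_exists X A -> hom_exists (kappa Pi Sigma k A B X) B.
Proof.
  intros _ _ X [h Hh].
  exists (eval_class Pi Sigma A B k X h).
  apply eval_class_hom, Hh.
Qed.
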